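(* Let $\mathfrak A$ and $\mathcal A$ be Banach algebras with $\mathcal A$ a commutative Banach $\mathfrak A$-bimodule with compatible actions. Then $\mathcal A$ is $\mathfrak A$-module uniformly approximately amenable if and only if it is $\mathfrak A$-module amenable.
   Context: Compatible actions: $\alpha\cdot(ab)=(\alpha\cdot a)b$, $(ab)\cdot\alpha=a(b\cdot\alpha)$; commutative means $\alpha\cdot a=a\cdot\alpha$. A Banach $\mathcal A$-$\mathfrak A$-module is a Banach space $X$ which is a Banach $\mathcal A$-bimodule and $\mathfrak A$-bimodule with $\alpha\cdot(a\cdot x)=(\alpha\cdot a)\cdot x$, $a\cdot(\alpha\cdot x)=(a\cdot\alpha)\cdot x$, $a\cdot(x\cdot\alpha)=(a\cdot x)\cdot\alpha$ and analogous right identities; commutative if $\alpha\cdot x=x\cdot\alpha$; $X^*$ has dual actions. A module derivation $D:\mathcal A\to X^*$ is additive, bounded ($\|D(a)\|\le M\|a\|$), with $D(ab)=D(a)\cdot b+a\cdot D(b)$, $D(\alpha\cdot a)=\alpha\cdot D(a)$, $D(a\cdot\alpha)=D(a)\cdot\alpha$. $\mathcal A$ is $\mathfrak A$-module amenable if for every commutative Banach $\mathcal A$-$\mathfrak A$-module $X$ every module derivation $D:\mathcal A\to X^*$ is inner ($D(a)=a\cdot f-f\cdot a$ for some $f\in X^*$), and $\mathfrak A$-module uniformly approximately amenable if for every such $X$ and $D$ there is a net $(f_i)\subseteq X^*$ with $\sup_{\|a\|\le1}\|D(a)-(a\cdot f_i-f_i\cdot a)\|\to0$. *)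

From HB Require Import structures.
From mathcomp Require Import all_boot all_order all_algebra.
From mathcomp Require Import all_classical all_reals all_analysis.
From mathcomp.real_closed Require Export complex.
Export numFieldNormedType.Exports.
Set Implicit Arguments. Unset Strict Implicit. Unset Printing Implicit Defensive.
Import Order.TTheory GRing.Theory Num.Theory.
Local Open Scope ring_scope.

Section BanachModules.
Variable K : numFieldType.

Definition contractive_bilinear (U V W : normedModType K) (m : U -> V -> W) :=
  [/\ (forall u1 u2 v, m (u1 + u2) v = m u1 v + m u2 v),
      (forall (k : K) u v, m (k *: u) v = k *: m u v),
      (forall u v1 v2, m u (v1 + v2) = m u v1 + m u v2),
      (forall (k : K) u v, m u (k *: v) = k *: m u v) &
      (forall u v, `|m u v| <= `|u| * `|v|)].

Definition banach_algebra (A : completeNormedModType K) (mul : A -> A -> A) :=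
  contractive_bilinear mul /\ (forall a b c, mul a (mul b c) = mul (mul a b) c).

Definition banach_bimodule (A : completeNormedModType K) (mul : A -> A -> A)
    (X : completeNormedModType K) (l : A -> X -> X) (r : X -> A -> X) :=
  [/\ contractive_bilinear l, contractive_bilinear r,
      (forall a b x, l (mul a b) x = l a (l b x)),
      (forall a b x, r x (mul a b) = r (r x a) b) &
      (forall a b x, l a (r x b) = r (l a x) b)].

Definition compatible_actions (U A : completeNormedModType K)
    (mulA : A -> A -> A) (lU : U -> A -> A) (rU : A -> U -> A) :=
  (forall al a b, lU al (mulA a b) = mulA (lU al a) b) /\
  (forall al a b, rU (mulA a b) al = mulA a (rU b al)).

Definition commutative_action (U X : completeNormedModType K)
    (l : U -> X -> X) (r : X -> U -> X) := forall al x, l al x = r x al.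

Definition banach_AU_module
    (U : completeNormedModType K) (mulU : U -> U -> U)
    (A : completeNormedModType K) (mulA : A -> A -> A)
    (lUA : U -> A -> A) (rUA : A -> U -> A)
    (X : completeNormedModType K)
    (la : A -> X -> X) (ra : X -> A -> X)
    (lu : U -> X -> X) (ru : X -> U -> X) :=
  [/\ banach_bimodule mulA la ra, banach_bimodule mulU lu ru,
      [/\ (forall al a x, lu al (la a x) = la (lUA al a) x),
          (forall al a x, la a (lu al x) = la (rUA a al) x) &
          (forall al a x, la a (ru x al) = ru (la a x) al)] &
      [/\ (forall al a x, ra (lu al x) a = lu al (ra x a)),
          (forall al a x, ra (ru x al) a = ra x (lUA al a)) &
          (forall al a x, ru (ra x a) al = ra x (rUA a al))]].

Definition dual_elem (X : normedModType K) (f : X -> K) :=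
  [/\ (forall x y, f (x + y) = f x + f y),
      (forall (k : K) x, f (k *: x) = k * f x) &
      exists M : K, forall x, `|f x| <= M * `|x|].

Definition dual_lact (A X : Type) (r : X -> A -> X) (a : A) (f : X -> K) :
  X -> K := fun x => f (r x a).
Definition dual_ract (A X : Type) (l : A -> X -> X) (f : X -> K) (a : A) :
  X -> K := fun x => f (l a x).

Definition module_derivation
    (U A X : completeNormedModType K) (mulA : A -> A -> A)
    (lUA : U -> A -> A) (rUA : A -> U -> A)
    (la : A -> X -> X) (ra : X -> A -> X)
    (lu : U -> X -> X) (ru : X -> U -> X) (D : A -> X -> K) :=
  [/\ (forall a, dual_elem (D a)),
      (forall a b, D (a + b) = (fun x => D a x + D b x)),
      (* boundedness ||D(a)|| <= M ||a||, the dual norm unfolded *)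
      (exists M : K, forall a x, `|D a x| <= M * `|a| * `|x|),
      (forall a b, D (mulA a b) =
         (fun x => dual_ract la (D a) b x + dual_lact ra a (D b) x)) &
      (forall al a, D (lUA al a) = dual_lact ru al (D a)) /\
      (forall al a, D (rUA a al) = dual_ract lu (D a) al)].

Definition ad_dual (A X : Type) (la : A -> X -> X) (ra : X -> A -> X)
  (f : X -> K) (a : A) : X -> K :=
  fun x => dual_lact ra a f x - dual_ract la f a x.

Definition module_amenable
    (U : completeNormedModType K) (mulU : U -> U -> U)
    (A : completeNormedModType K) (mulA : A -> A -> A)
    (lUA : U -> A -> A) (rUA : A -> U -> A) :=
  forall (X : completeNormedModType K)
         (la : A -> X -> X) (ra : X -> A -> X)
         (lu : U -> X -> X) (ru : X -> U -> X),
    banach_AU_module mulU mulA lUA rUA la ra lu ru ->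
    commutative_action lu ru ->
    forall D : A -> X -> K, module_derivation mulA lUA rUA la ra lu ru D ->
    exists f : X -> K, dual_elem f /\ forall a, D a = ad_dual la ra f a.

(* Uniform approximate amenability: a net (f_i)_{i in I} in X^*, I directed
   by le, with sup_{||a||<=1} ||D(a) - ad_{f_i}(a)|| -> 0 along the net;
   the supremum of dual norms is unfolded as a uniform bound. *)
Definition module_uniformly_approximately_amenable
    (U : completeNormedModType K) (mulU : U -> U -> U)
    (A : completeNormedModType K) (mulA : A -> A -> A)
    (lUA : U -> A -> A) (rUA : A -> U -> A) :=
  forall (X : completeNormedModType K)
         (la : A -> X -> X) (ra : X -> A -> X)
         (lu : U -> X -> X) (ru : X -> U -> X),
    banach_AU_module mulU mulA lUA rUA la ra lu ru ->
    commutative_action lu ru ->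
    forall D : A -> X -> K, module_derivation mulA lUA rUA la ra lu ru D ->
    exists (I : Type) (le : I -> I -> Prop) (f : I -> X -> K),
      [/\ inhabited I,
          (forall i, le i i) /\ (forall i j k, le i j -> le j k -> le i k),
          (forall i j, exists k, le i k /\ le j k),
          (forall i, dual_elem (f i)) &
          forall eps : K, 0 < eps -> exists i0, forall i, le i0 i ->
            forall a x, `|D a x - ad_dual la ra (f i) a x| <= eps * `|a| * `|x|].

End BanachModules.

From HB Require Import structures.
From mathcomp Require Import all_boot all_order all_algebra.
From mathcomp Require Import all_classical all_reals all_analysis.
From mathcomp.real_closed Require Import complex.
From mathcomp.algebra_tactics Require Import ring lra.
Import numFieldNormedType.Exports.
Set Implicit Arguments. Unset Strict Implicit. Unset Printing Implicit Defensive.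
Import Order.TTheory GRing.Theory Num.Theory.
Local Open Scope ring_scope.
Local Open Scope classical_set_scope.
Local Open Scope complex_scope.

(* Amenability trivially gives uniform approximate amenability (constant net). The crux is a uniform bound: some K
   is such that every module derivation D with |D| <= 1 lies within 1/2 of an
   inner derivation ad f with |f| <= K. Otherwise choose D_n defeating K = n+1;
   the diagonal derivation (D_n)_n into the dual of the l1-sum l1(X), again a
   commutative Banach A-U-module, is uniformly approximable by inner ones, and
   restricting one approximant to the n-th coordinate, for n beyond its norm,
   contradicts the choice of D_n. Iterating the bound, D - ad (f_0 + ... +
   f_(N-1)) has norm at most 2^-N |D| with |f_k| <= K 2^-k |D|, so f = sum f_k
   converges and D = ad f. *)

Section RealNorm.
Variable R : realType.
Local Notation C := R[i].

(* Norms in a normed space over [C] are complex numbers with zero imaginary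
   part; [rnorm] is their real part, so that norm estimates can be done in the
   totally ordered field [R]. *)
Definition rnorm {V : normedZmodType C} (x : V) : R := complex.Re `|x|.

Lemma rnormE {V : normedZmodType C} (x : V) : `|x| = (rnorm x)%:C.
Proof. by rewrite /rnorm RRe_real // ger0_real. Qed.

Lemma rnorm_ge0 {V : normedZmodType C} (x : V) : 0 <= rnorm x.
Proof. by have := normr_ge0 x; rewrite rnormE ler0c. Qed.

Lemma rnormD {V : normedZmodType C} (x y : V) : rnorm (x + y) <= rnorm x + rnorm y.
Proof. by have := ler_normD x y; rewrite !rnormE -rmorphD lecR. Qed.

Lemma rnorm0 {V : normedZmodType C} : rnorm (0 : V) = 0.
Proof. by rewrite /rnorm normr0. Qed.

Lemma rnormN {V : normedZmodType C} (x : V) : rnorm (- x) = rnorm x.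
Proof. by rewrite /rnorm normrN. Qed.

Lemma rnormB {V : normedZmodType C} (x y : V) : rnorm (x - y) = rnorm (y - x).
Proof. by rewrite /rnorm distrC. Qed.

Lemma rnorm_eq0 {V : normedZmodType C} (x : V) : rnorm x = 0 -> x = 0.
Proof. by move=> h; apply/normr0_eq0; rewrite rnormE h. Qed.

Lemma rnorm_norm {V : normedZmodType C} (x : V) : rnorm `|x| = rnorm x.
Proof. by rewrite /rnorm normr_id. Qed.

Lemma rnormZ {V : normedModType C} (k : C) (x : V) : rnorm (k *: x) = rnorm k * rnorm x.
Proof. by rewrite /rnorm normrZ !rnormE -rmorphM. Qed.

Lemma rnormM (a b : C) : rnorm (a * b) = rnorm a * rnorm b.
Proof. by rewrite /rnorm normrM !rnormE -rmorphM. Qed.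

Lemma rnorm_real (r : R) : rnorm (r%:C) = `|r|.
Proof. by rewrite /rnorm normc_def /= expr0n /= addr0 sqrtr_sqr. Qed.

Lemma Re_le_rnorm (z : C) : `|complex.Re z| <= rnorm z.
Proof. by rewrite -lecR -rnormE normc_ge_Re. Qed.

Lemma Im_le_rnorm (z : C) : `|complex.Im z| <= rnorm z.
Proof.
have := Re_le_rnorm (z * 'i%C); rewrite rnormM.
have -> : rnorm ('i%C : C) = 1.
  by rewrite /rnorm normc_def /= expr0n /= add0r expr1n sqrtr1.
by rewrite mulr1 ReiNIm normrN.
Qed.

Lemma rnorm_le_ReIm (z : C) : rnorm z <= `|complex.Re z| + `|complex.Im z|.
Proof.
rewrite /rnorm normc_def /=; case: z => a b /=.
rewrite -(@ler_pXn2r _ 2) ?nnegrE ?sqrtr_ge0 ?addr_ge0 //.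
rewrite sqr_sqrtr ?addr_ge0 ?sqr_ge0 //.
rewrite -[in X in X <= _](real_normK (num_real a)).
rewrite -[in X in X <= _](real_normK (num_real b)) sqrrD.
have : 0 <= `|a| * `|b| by rewrite mulr_ge0.
lra.
Qed.

Lemma rnorm_sum (I : Type) (r : seq I) (P : pred I) (t : I -> C) :
  rnorm (\sum_(i <- r | P i) t i) <= \sum_(i <- r | P i) rnorm (t i).
Proof.
have := ler_norm_sum r t P.
have -> : \sum_(i <- r | P i) `|t i| = (\sum_(i <- r | P i) rnorm (t i))%:C.
  by rewrite rmorph_sum; apply: eq_bigr => i _; rewrite rnormE.
by rewrite rnormE lecR.
Qed.

Lemma rnorm_le_of_normr {V W : normedZmodType C} (y : V) (M : C) (z : W) :
  `|y| <= M * `|z| -> rnorm y <= rnorm M * rnorm z.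
Proof.
move=> h; have h0 : 0 <= M * `|z| by apply: le_trans h.
have e : M * `|z| = `|M| * `|z| by rewrite -(ger0_norm h0) normrM normr_id.
by move: h; rewrite e !rnormE -rmorphM lecR.
Qed.

Lemma normr_le_of_rnorm {V W : normedZmodType C} (y : V) (M : R) (z : W) :
  rnorm y <= M * rnorm z -> `|y| <= M%:C * `|z|.
Proof. by move=> h; rewrite !rnormE -rmorphM lecR. Qed.

End RealNorm.

Section ComplexSeries.
Variable R : realType.
Local Notation C := R[i].

Lemma cauchy_cvgn (u : nat -> R) :
  (forall e, 0 < e -> exists N, forall m n, (N <= m)%N -> (N <= n)%N ->
     `|u m - u n| <= e) -> cvgn u.
Proof.
move=> H; apply/cauchy_cvgP; apply: cauchy_exP => e e0.
have [N HN] := H (e / 2) (divr_gt0 e0 (ltr0Sn _ 1)).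
exists (u N), N => // n /= Hn; rewrite /ball /=.
by apply: le_lt_trans (HN N n (leqnn N) Hn) _; lra.
Qed.

Lemma cvgn_dist_le (u : nat -> R) : cvgn u -> forall e, 0 < e ->
  exists N, forall n, (N <= n)%N -> `|limn u - u n| <= e.
Proof. by move=> /cvgrPdist_le H e e0; have [N _ HN] := H e e0; exists N. Qed.

Definition ccvg (u : nat -> C) (L : C) := forall e : R, 0 < e ->
  exists N, forall n, (N <= n)%N -> rnorm (u n - L) <= e.

Definition ccauchy (u : nat -> C) := forall e : R, 0 < e ->
  exists N, forall m n, (N <= m)%N -> (N <= n)%N -> rnorm (u m - u n) <= e.

(* [C] carries no completeness instance, so limits of Cauchy sequences are
   built from the limits of the real and imaginary parts. *)
Definition clim (u : nat -> C) : C :=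
  (limn (fun n => complex.Re (u n))) +i* (limn (fun n => complex.Im (u n))).

Lemma ccauchy_ccvg u : ccauchy u -> ccvg u (clim u).
Proof.
move=> H.
have ReB (x y : C) : complex.Re (x - y) = complex.Re x - complex.Re y by case: x; case: y.
have ImB (x y : C) : complex.Im (x - y) = complex.Im x - complex.Im y by case: x; case: y.
have cR : cvgn (fun n => complex.Re (u n)).
  apply: cauchy_cvgn => e e0; have [N HN] := H e e0; exists N => m n hm hn.
  by rewrite -ReB; apply: le_trans (Re_le_rnorm _) (HN m n hm hn).
have cI : cvgn (fun n => complex.Im (u n)).
  apply: cauchy_cvgn => e e0; have [N HN] := H e e0; exists N => m n hm hn.
  by rewrite -ImB; apply: le_trans (Im_le_rnorm _) (HN m n hm hn).
move=> e e0; have e2 : 0 < e / 2 by lra.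
have [N1 H1] := cvgn_dist_le cR e2; have [N2 H2] := cvgn_dist_le cI e2.
exists (maxn N1 N2) => n hn; apply: le_trans (rnorm_le_ReIm _) _.
rewrite ReB ImB /= distrC [X in _ + X]distrC.
have := H1 n (leq_trans (leq_maxl _ _) hn).
have := H2 n (leq_trans (leq_maxr _ _) hn).
lra.
Qed.

Lemma ccvg_unique u L M : ccvg u L -> ccvg u M -> L = M.
Proof.
move=> HL HM; apply/eqP; rewrite -subr_eq0; apply/eqP; apply: rnorm_eq0.
apply/le_anti; rewrite rnorm_ge0 andbT; apply/ler_addgt0Pr => e e0.
have e2 : 0 < e / 2 by lra.
have [N1 H1] := HL _ e2; have [N2 H2] := HM _ e2.
have h1 := H1 (maxn N1 N2) (leq_maxl _ _).
have h2 := H2 (maxn N1 N2) (leq_maxr _ _).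
have -> : L - M = (u (maxn N1 N2) - M) - (u (maxn N1 N2) - L) by ring.
apply: le_trans (rnormD _ _) _; rewrite rnormN; lra.
Qed.

Lemma ccvgD u v L M : ccvg u L -> ccvg v M -> ccvg (fun n => u n + v n) (L + M).
Proof.
move=> HL HM e e0; have e2 : 0 < e / 2 by lra.
have [N1 H1] := HL _ e2; have [N2 H2] := HM _ e2.
exists (maxn N1 N2) => n hn.
have h1 := H1 n (leq_trans (leq_maxl _ _) hn).
have h2 := H2 n (leq_trans (leq_maxr _ _) hn).
have -> : u n + v n - (L + M) = (u n - L) + (v n - M) by ring.
apply: le_trans (rnormD _ _) _; lra.
Qed.

Lemma ccvgZ (k : C) u L : ccvg u L -> ccvg (fun n => k * u n) (k * L).
Proof.
move=> HL e e0; have hk := rnorm_ge0 k.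
have hk1 : 0 < rnorm k + 1 by lra.
have [N H] := HL _ (divr_gt0 e0 hk1).
exists N => n hn; rewrite -mulrBr rnormM.
apply: le_trans (_ : (rnorm k + 1) * (e / (rnorm k + 1)) <= _).
  by apply: ler_pM; [exact: rnorm_ge0 | exact: rnorm_ge0 | lra | exact: H].
by rewrite mulrC divfK // gt_eqF.
Qed.

Lemma ccvg_le u L (B : R) : ccvg u L -> (forall n, rnorm (u n) <= B) -> rnorm L <= B.
Proof.
move=> HL HB; apply/ler_addgt0Pr => e e0; have [N H] := HL e e0.
have -> : L = u N - (u N - L) by ring.
apply: le_trans (rnormD _ _) _; rewrite rnormN.
by apply: lerD; [exact: HB | rewrite rnormB -rnormN opprB; exact: H].
Qed.

Definition psum (t : nat -> C) N := \sum_(0 <= k < N) t k.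

Definition abs_summable (t : nat -> C) :=
  exists M : R, forall N, \sum_(0 <= k < N) rnorm (t k) <= M.

Definition csum (t : nat -> C) := clim (psum t).

Lemma abs_summable_ccauchy t : abs_summable t -> ccauchy (psum t).
Proof.
move=> [M HM]; pose s N := \sum_(0 <= k < N) rnorm (t k).
have sB m n : (m <= n)%N -> s n - s m = \sum_(m <= k < n) rnorm (t k).
  by move=> hmn; rewrite /s (big_cat_nat (leq0n m) hmn) /=; ring.
have s_ge m n : (m <= n)%N -> s m <= s n.
  by move=> hmn; rewrite -subr_ge0 sB //; apply: sumr_ge0 => i _; apply: rnorm_ge0.
have scv : cvgn s.
  by apply: nondecreasing_is_cvgn; [exact: s_ge | exists M => _ [n _ <-]; exact: HM].
move=> e e0; have [N HN] := cvgn_dist_le scv (divr_gt0 e0 (ltr0Sn _ 1)).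
exists N => m n hm hn.
wlog hmn : m n hm hn / (m <= n)%N.
  move=> W; case: (leqP m n) => h; first exact: W.
  by rewrite rnormB; apply: W => //; apply: ltnW.
have -> : psum t m - psum t n = - \sum_(m <= k < n) t k.
  by rewrite /psum (big_cat_nat (leq0n m) hmn) /=; ring.
rewrite rnormN; apply: le_trans (rnorm_sum _ _ _) _; rewrite -sB //.
have := HN m hm; rewrite ler_norml => /andP[_ h1].
have := HN n hn; rewrite ler_norml => /andP[h2 _].
lra.
Qed.

Lemma csum_ccvg t : abs_summable t -> ccvg (psum t) (csum t).
Proof. by move=> h; apply: ccauchy_ccvg; apply: abs_summable_ccauchy. Qed.

Lemma csum_eq t L : abs_summable t -> ccvg (psum t) L -> csum t = L.
Proof. by move=> h hL; apply: (ccvg_unique (csum_ccvg h) hL). Qed.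

Lemma abs_summableD t s :
  abs_summable t -> abs_summable s -> abs_summable (fun n => t n + s n).
Proof.
move=> [M1 H1] [M2 H2]; exists (M1 + M2) => N.
apply: le_trans (lerD (H1 N) (H2 N)); rewrite -big_split /=.
by apply: ler_sum => i _; apply: rnormD.
Qed.

Lemma abs_summableZ (k : C) t : abs_summable t -> abs_summable (fun n => k * t n).
Proof.
move=> [M H]; exists (rnorm k * M) => N.
under eq_bigr do rewrite rnormM; rewrite -mulr_sumr.
by apply: ler_wpM2l; [apply: rnorm_ge0 | apply: H].
Qed.

Lemma abs_summableB t s :
  abs_summable t -> abs_summable s -> abs_summable (fun n => t n - s n).
Proof.
move=> ht hs; have := abs_summableD ht (abs_summableZ (-1) hs).
by under eq_fun do rewrite mulN1r.
Qed.

Lemma csumD t s : abs_summable t -> abs_summable s ->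
  csum (fun n => t n + s n) = csum t + csum s.
Proof.
move=> ht hs; apply: csum_eq; first exact: abs_summableD.
have -> : psum (fun n => t n + s n) = (fun N => psum t N + psum s N).
  by apply: funext => N; rewrite /psum big_split.
exact: ccvgD (csum_ccvg ht) (csum_ccvg hs).
Qed.

Lemma csumZ (k : C) t : abs_summable t -> csum (fun n => k * t n) = k * csum t.
Proof.
move=> ht; apply: csum_eq; first exact: abs_summableZ.
have -> : psum (fun n => k * t n) = (fun N => k * psum t N).
  by apply: funext => N; rewrite /psum mulr_sumr.
exact: ccvgZ (csum_ccvg ht).
Qed.

Lemma csumB t s : abs_summable t -> abs_summable s ->
  csum (fun n => t n - s n) = csum t - csum s.
Proof.
move=> ht hs; rewrite -mulN1r -csumZ // -csumD //; last exact: abs_summableZ.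
by congr csum; apply: funext => n; rewrite mulN1r.
Qed.

Lemma rnorm_csum_le t (B : R) : abs_summable t ->
  (forall N, \sum_(0 <= k < N) rnorm (t k) <= B) -> rnorm (csum t) <= B.
Proof.
move=> ht hB; apply: ccvg_le (csum_ccvg ht) _ => n.
exact: le_trans (rnorm_sum _ _ _) (hB n).
Qed.

Lemma sum_nat_supp1 (V : zmodType) (f : nat -> V) k n :
  (forall m, m != k -> f m = 0) ->
  \sum_(0 <= i < n) f i = if (k < n)%N then f k else 0.
Proof.
move=> H; elim: n => [|n IH]; first by rewrite big_geq.
rewrite big_nat_recr //= IH.
case: (ltngtP k n) => hkn.
- by rewrite (H n) ?addr0 ?ltnS ?(ltnW hkn) // neq_ltn hkn orbT.
- by rewrite (H n) ?addr0 1?ltnS 1?leqNgt ?hkn // neq_ltn hkn.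
- by rewrite hkn add0r ltnSn.
Qed.

Lemma csum_supp1 t k : (forall m, m != k -> t m = 0) -> csum t = t k.
Proof.
move=> H; apply: csum_eq.
  exists (rnorm (t k)) => N.
  rewrite (@sum_nat_supp1 _ (fun i => rnorm (t i)) k) => [|m /H ->]; last exact: rnorm0.
  by case: ifP => _; [exact: lexx | exact: rnorm_ge0].
move=> e e0; exists k.+1 => n hn; rewrite /psum (sum_nat_supp1 _ H) hn subrr rnorm0.
exact: ltW.
Qed.

End ComplexSeries.

Section L1Space.
Variable R : realType.
Local Notation C := R[i].
Variable X : completeNormedModType C.

Definition l1_psum (e : nat -> X) N : R := \sum_(0 <= k < N) rnorm (e k).

Definition l1_bounded (e : nat -> X) := exists M : R, forall N, l1_psum e N <= M.

Definition l1_space : {pred nat -> X} := [pred e | `[< l1_bounded e >]].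

Lemma l1_psum_ge0 e N : 0 <= l1_psum e N.
Proof. by apply: sumr_ge0 => i _; apply: rnorm_ge0. Qed.

Lemma l1_psum_le (e f : nat -> X) (c : R) :
  (forall n, rnorm (f n) <= c * rnorm (e n)) ->
  forall N, l1_psum f N <= c * l1_psum e N.
Proof. by move=> H N; rewrite /l1_psum mulr_sumr; apply: ler_sum => i _. Qed.

Lemma l1_submod_closed : submod_closed l1_space.
Proof.
split=> [|k u v].
  by apply/asboolP; exists 0 => N; rewrite /l1_psum big1 // => i _; rewrite rnorm0.
move=> /asboolP[Mu Hu] /asboolP[Mv Hv]; apply/asboolP.
exists (rnorm k * Mu + Mv) => N.
apply: le_trans (lerD (ler_wpM2l (rnorm_ge0 k) (Hu N)) (Hv N)).
rewrite /l1_psum mulr_sumr -big_split /=; apply: ler_sum => i _.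
by apply: le_trans (rnormD _ _) _; rewrite rnormZ.
Qed.

HB.instance Definition _ :=
  GRing.isSubmodClosed.Build C (nat -> X) l1_space l1_submod_closed.

Record l1 := L1 { l1v : nat -> X; l1vP : l1v \in l1_space }.

HB.instance Definition _ := [isSub for l1v].
HB.instance Definition _ := [Choice of l1 by <:].
HB.instance Definition _ := [SubChoice_isSubLmodule of l1 by <:].

Lemma l1_ext (x y : l1) : (forall n, l1v x n = l1v y n) -> x = y.
Proof. by move=> h; apply: val_inj; apply: funext. Qed.

Lemma l1vD (x y : l1) n : l1v (x + y) n = l1v x n + l1v y n. Proof. by []. Qed.
Lemma l1vB (x y : l1) n : l1v (x - y) n = l1v x n - l1v y n. Proof. by []. Qed.
Lemma l1vZ k (x : l1) n : l1v (k *: x) n = k *: l1v x n. Proof. by []. Qed.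

Definition l1_norm (x : l1) : R := sup (range (l1_psum (l1v x))).

Lemma l1_psum_ubound x : has_ubound (range (l1_psum (l1v x))).
Proof. by have /asboolP[M H] := l1vP x; exists M => _ [N _ <-]. Qed.

Lemma l1_psum_le_norm x N : l1_psum (l1v x) N <= l1_norm x.
Proof. by apply: (ub_le_sup (l1_psum_ubound x)); exists N. Qed.

Lemma l1_norm_le x B : (forall N, l1_psum (l1v x) N <= B) -> l1_norm x <= B.
Proof. by move=> H; apply: ge_sup => [|_ [N _ <-]]; [exists (l1_psum (l1v x) 0), 0|]. Qed.

Lemma l1_norm_ge0 x : 0 <= l1_norm x.
Proof. exact: le_trans (l1_psum_ge0 _ 0) (l1_psum_le_norm x 0). Qed.

Lemma rnorm_l1v_le x n : rnorm (l1v x n) <= l1_norm x.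
Proof.
apply: le_trans (l1_psum_le_norm x n.+1); rewrite /l1_psum big_nat_recr //= lerDr.
exact: l1_psum_ge0.
Qed.

Lemma l1_normD x y : l1_norm (x + y) <= l1_norm x + l1_norm y.
Proof.
apply: l1_norm_le => N.
apply: le_trans (lerD (l1_psum_le_norm x N) (l1_psum_le_norm y N)).
by rewrite /l1_psum -big_split /=; apply: ler_sum => i _; apply: rnormD.
Qed.

Lemma l1_normZ k x : l1_norm (k *: x) = rnorm k * l1_norm x.
Proof.
have psZ N : l1_psum (l1v (k *: x)) N = rnorm k * l1_psum (l1v x) N.
  by rewrite /l1_psum mulr_sumr; apply: eq_bigr => i _; rewrite l1vZ rnormZ.
apply/le_anti/andP; split.
  apply: l1_norm_le => N; rewrite psZ.
  by apply: ler_wpM2l; [exact: rnorm_ge0 | exact: l1_psum_le_norm].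
have [->|hk] := eqVneq k 0; first by rewrite rnorm0 mul0r; apply: l1_norm_ge0.
have nk : 0 < rnorm k.
  by rewrite lt0r rnorm_ge0 andbT; apply: contra_neq hk; apply: rnorm_eq0.
rewrite -ler_pdivlMl //; apply: l1_norm_le => N.
by rewrite ler_pdivlMl // -psZ; apply: l1_psum_le_norm.
Qed.

Lemma l1_norm_eq0 x : l1_norm x = 0 -> x = 0.
Proof.
move=> h; apply: l1_ext => n.
apply: rnorm_eq0; apply/le_anti; rewrite rnorm_ge0 andbT -h.
exact: rnorm_l1v_le.
Qed.

Lemma l1_normC_D x y : (l1_norm (x + y))%:C <= (l1_norm x)%:C + (l1_norm y)%:C.
Proof. by rewrite -rmorphD lecR; apply: l1_normD. Qed.

Lemma l1_normC_Z (k : C) x : (l1_norm (k *: x))%:C = `|k| * (l1_norm x)%:C.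
Proof. by rewrite l1_normZ rnormE rmorphM. Qed.

Lemma l1_normC_eq0 x : (l1_norm x)%:C = 0 -> x = 0.
Proof. by move=> [h]; apply: l1_norm_eq0. Qed.

HB.instance Definition _ :=
  Lmodule_isNormed.Build C l1 l1_normC_D l1_normC_Z l1_normC_eq0.

Lemma l1_normE (x : l1) : `|x| = (l1_norm x)%:C.
Proof. by []. Qed.

Lemma rnorm_l1 (x : l1) : rnorm x = l1_norm x.
Proof. by rewrite /rnorm l1_normE. Qed.

Lemma l1_normN x : l1_norm (- x) = l1_norm x.
Proof. by rewrite -scaleN1r l1_normZ rnormN /rnorm normr1 mul1r. Qed.

Section Completeness.
Variable F : set_system l1.
Hypotheses (FF : ProperFilter F) (Fc : cauchy_ex F).

Lemma l1_cauchy_coord_cvg n : cvg ((fun x : l1 => l1v x n) @ F).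
Proof.
apply/cauchy_cvgP; apply: cauchy_exP => eps heps.
have [x0 Hx0] := Fc heps; exists (l1v x0 n).
suff : F (fun y : l1 => ball (l1v x0 n) eps (l1v y n)) by [].
apply: filterS Hx0 => y; rewrite -!ball_normE /ball_ /= => h.
by apply: le_lt_trans h; rewrite rnormE l1_normE lecR -l1vB rnorm_l1v_le.
Qed.

Let z n := lim ((fun x : l1 => l1v x n) @ F).

(* Finitely many coordinates are simultaneously close to their limits on a
   member of [F]; this bounds every partial sum of [z - x0]. *)
Lemma l1_psum_lim_sub_le (r : R) x0 : 0 < r -> F (ball x0 (r%:C)) ->
  forall N, l1_psum (fun n => z n - l1v x0 n) N <= r.
Proof.
move=> r0 Fx0 N; apply/ler_addgt0Pr => eta heta.
have hN := ler0n R N.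
pose d := eta / (N%:R + 1); have d0 : 0 < d by apply: divr_gt0 => //; lra.
have near_z n : F (fun y => `|z n - l1v y n| < d%:C).
  have := l1_cauchy_coord_cvg (n := n); move/cvgrPdist_lt => /(_ (d%:C)).
  by rewrite ltcR => /(_ d0).
have near_all M : F (fun y => forall n, (n < M)%N -> `|z n - l1v y n| < d%:C).
  elim: M => [|M IH]; first by apply: filterS filterT => y _ n.
  apply: filterS (filterI IH (near_z M)) => y [h1 h2] n.
  by rewrite ltnS leq_eqVlt => /orP[/eqP -> //|]; apply: h1.
have [y [hy1]] := filter_ex (filterI (near_all N) Fx0).
rewrite -ball_normE /ball_ /= l1_normE ltcR => hy2.
have h1 : l1_psum (fun n => z n - l1v x0 n) N <=
    \sum_(0 <= n < N) d + l1_psum (l1v (y - x0)) N.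
  rewrite /l1_psum -big_split /=; apply: ler_sum_nat => n hn.
  have -> : z n - l1v x0 n = (z n - l1v y n) + l1v (y - x0) n.
    by rewrite l1vB addrA subrK.
  apply: le_trans (rnormD _ _) _; apply: lerD => //.
  by have := hy1 n (andP hn).2; rewrite rnormE ltcR => /ltW.
have h2 : l1_psum (l1v (y - x0)) N <= r.
  apply: le_trans (l1_psum_le_norm _ N) _.
  by rewrite -(opprB x0 y) l1_normN; apply: ltW.
have h3 : \sum_(0 <= n < N) d = N%:R * d by rewrite sumr_const_nat subn0 mulr_natl.
have h4 : N%:R * d <= eta.
  rewrite /d mulrA ler_pdivrMr; last by lra.
  by rewrite mulrC ler_pM2l //; lra.
lra.
Qed.

Lemma l1_lim_bounded : l1_bounded z.
Proof.
have [x1 Fx1] := Fc (ltr01 : (0 : C) < 1%:C).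
exists (1 + l1_norm x1) => N.
have k1 := l1_psum_lim_sub_le ltr01 Fx1 N.
have k2 := l1_psum_le_norm x1 N.
suff : l1_psum z N <= l1_psum (fun n => z n - l1v x1 n) N + l1_psum (l1v x1) N.
  by lra.
rewrite /l1_psum -big_split /=; apply: ler_sum => n _.
by have := rnormD (z n - l1v x1 n) (l1v x1 n); rewrite subrK.
Qed.

Lemma l1_cauchy_cvg : cvg F.
Proof.
pose zl : l1 := L1 (asboolT l1_lim_bounded).
apply: (cvgP zl); apply/cvgrPdist_le => eps heps.
have er : eps = (complex.Re eps)%:C by rewrite RRe_real // gtr0_real.
have hr : 0 < complex.Re eps / 2 by move: heps; rewrite er ltcR; lra.
have [x0 Fx0] : exists x0, F (ball x0 (complex.Re eps / 2)%:C).
  by apply: Fc; rewrite ltcR.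
have hzx : l1_norm (zl - x0) <= complex.Re eps / 2.
  by apply: l1_norm_le => N; apply: (l1_psum_lim_sub_le hr Fx0 N).
apply: filterS Fx0 => y; rewrite -ball_normE /ball_ /= l1_normE ltcR => hy.
rewrite er l1_normE lecR.
have -> : zl - y = (zl - x0) + (x0 - y) by rewrite addrA subrK.
by apply: le_trans (l1_normD _ _) _; lra.
Qed.

End Completeness.

Lemma l1_complete (F : set_system l1) : ProperFilter F -> cauchy F -> cvg F.
Proof. by move=> FF Fc; apply: l1_cauchy_cvg; apply/cauchyP. Qed.

HB.instance Definition _ := Uniform_isComplete.Build l1 l1_complete.

End L1Space.

Section DualsAndDerivations.
Variable R : realType.
Local Notation C := R[i].

Definition functional_bound {V : normedModType C} (f : V -> C) (K : R) :=
  forall x, rnorm (f x) <= K * rnorm x.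

Lemma dual_elem_of (V : normedModType C) (f : V -> C) :
  (forall x y, f (x + y) = f x + f y) -> (forall (k : C) x, f (k *: x) = k * f x) ->
  (exists K, functional_bound f K) -> dual_elem f.
Proof. by move=> h1 h2 [K hK]; split => //; exists K%:C => x; apply: normr_le_of_rnorm. Qed.

Lemma dual_elem_bound (V : normedModType C) (f : V -> C) :
  dual_elem f -> exists2 K, 0 <= K & functional_bound f K.
Proof.
move=> [_ _ [M hM]]; exists (rnorm M); first exact: rnorm_ge0.
by move=> x; apply: rnorm_le_of_normr.
Qed.

Lemma dual_elem0 (V : normedModType C) (f : V -> C) : dual_elem f -> f 0 = 0.
Proof. by move=> [h _ _]; apply: (addrI (f 0)); rewrite -h !addr0. Qed.

Lemma dual_elemD (V : normedModType C) (f g : V -> C) : dual_elem f -> dual_elem g ->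
  dual_elem (fun x => f x + g x).
Proof.
move=> hf hg; have [f1 f2 _] := hf; have [g1 g2 _] := hg.
have [Kf _ hKf] := dual_elem_bound hf; have [Kg _ hKg] := dual_elem_bound hg.
apply: dual_elem_of => [x y|k x|]; rewrite ?f1 ?g1 ?f2 ?g2; [ring|ring|].
exists (Kf + Kg) => x; rewrite mulrDl; apply: le_trans (rnormD _ _) _.
exact: lerD.
Qed.

Lemma dual_elemZ (V : normedModType C) (f : V -> C) (c : C) : dual_elem f ->
  dual_elem (fun x => c * f x).
Proof.
move=> hf; have [f1 f2 _] := hf; have [K _ hK] := dual_elem_bound hf.
apply: dual_elem_of => [x y|k x|]; rewrite ?f1 ?f2; [ring|ring|].
exists (rnorm c * K) => x; rewrite rnormM -mulrA.
by apply: ler_wpM2l; [exact: rnorm_ge0 | exact: hK].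
Qed.

Lemma dual_elemB (V : normedModType C) (f g : V -> C) : dual_elem f -> dual_elem g ->
  dual_elem (fun x => f x - g x).
Proof.
move=> hf hg; have := dual_elemD hf (dual_elemZ (-1) hg).
by under eq_fun do rewrite mulN1r.
Qed.

Lemma contractive_bilinear_rnorm (T V W : normedModType C) (m : T -> V -> W) :
  contractive_bilinear m -> forall u v, rnorm (m u v) <= rnorm u * rnorm v.
Proof. by move=> [_ _ _ _ h] u v; have := rnorm_le_of_normr (h u v); rewrite rnorm_norm. Qed.

Lemma contractive_bilinear0l (T V W : normedModType C) (m : T -> V -> W) :
  contractive_bilinear m -> forall v, m 0 v = 0.
Proof. by move=> [h _ _ _ _] v; apply: (addrI (m 0 v)); rewrite -h !addr0. Qed.

Lemma contractive_bilinear0r (T V W : normedModType C) (m : T -> V -> W) :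
  contractive_bilinear m -> forall u, m u 0 = 0.
Proof. by move=> [_ _ h _ _] u; apply: (addrI (m u 0)); rewrite -h !addr0. Qed.

Lemma ad_dualZ (A X : Type) (la : A -> X -> X) (ra : X -> A -> X) (f : X -> C) c a x :
  ad_dual la ra (fun y => c * f y) a x = c * ad_dual la ra f a x.
Proof. by rewrite /ad_dual /dual_lact /dual_ract; ring. Qed.

Section ModuleDerivations.
Variables (U A X : completeNormedModType C) (mulU : U -> U -> U) (mulA : A -> A -> A)
  (lUA : U -> A -> A) (rUA : A -> U -> A) (la : A -> X -> X) (ra : X -> A -> X)
  (lu : U -> X -> X) (ru : X -> U -> X).

Local Notation is_derivation := (module_derivation mulA lUA rUA la ra lu ru).

Definition derivation_bound (D : A -> X -> C) (B : R) :=
  forall a x, rnorm (D a x) <= B * (rnorm a * rnorm x).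

Lemma module_derivation_bound D : is_derivation D -> exists2 B, 0 < B & derivation_bound D B.
Proof.
move=> [_ _ [M hM] _ _]; exists (rnorm M + 1); first by have := rnorm_ge0 M; lra.
move=> a x; have := rnorm_le_of_normr (hM a x); rewrite rnormM rnorm_norm => h.
apply: le_trans h _; rewrite -mulrA; apply: ler_wpM2r; last lra.
by apply: mulr_ge0; apply: rnorm_ge0.
Qed.

Lemma module_derivation_of D :
  (forall a, dual_elem (D a)) ->
  (forall a b, D (a + b) = (fun x => D a x + D b x)) ->
  (exists B, derivation_bound D B) ->
  (forall a b, D (mulA a b) = (fun x => dual_ract la (D a) b x + dual_lact ra a (D b) x)) ->
  (forall al a, D (lUA al a) = dual_lact ru al (D a)) ->
  (forall al a, D (rUA a al) = dual_ract lu (D a) al) -> is_derivation D.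
Proof.
move=> h1 h2 [B hB] h4 h5 h6; split => //.
exists B%:C => a x; rewrite -mulrA rnormE [`|a|]rnormE [`|x|]rnormE -!rmorphM lecR.
exact: hB.
Qed.

Lemma module_derivationZ D (c : C) : is_derivation D -> is_derivation (fun a x => c * D a x).
Proof.
move=> hD; have [D1 D2 _ D4 [D5 D6]] := hD; have [B _ hB] := module_derivation_bound hD.
apply: module_derivation_of => [a|a b|||al a|al a]; try apply: funext => x.
- exact: dual_elemZ.
- by rewrite D2; ring.
- exists (rnorm c * B) => a x; rewrite rnormM -mulrA.
  by apply: ler_wpM2l; [exact: rnorm_ge0 | exact: hB].
- by move=> a b; apply: funext => x; rewrite D4 /dual_ract /dual_lact; ring.
- by rewrite D5.
- by rewrite D6.
Qed.

Lemma module_derivationB D1 D2 : is_derivation D1 -> is_derivation D2 ->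
  is_derivation (fun a x => D1 a x - D2 a x).
Proof.
move=> hD1 hD2; have [a1 b1 _ d1 [e1 f1]] := hD1; have [a2 b2 _ d2 [e2 f2]] := hD2.
have [B1 _ hB1] := module_derivation_bound hD1.
have [B2 _ hB2] := module_derivation_bound hD2.
apply: module_derivation_of => [a|a b|||al a|al a]; try apply: funext => x.
- exact: dual_elemB.
- by rewrite b1 b2; ring.
- exists (B1 + B2) => a x; apply: le_trans (rnormD _ _) _; rewrite rnormN mulrDl.
  exact: lerD.
- by move=> a b; apply: funext => x; rewrite d1 d2 /dual_ract /dual_lact; ring.
- by rewrite e1 e2.
- by rewrite f1 f2.
Qed.

(* The module identities for [ad f] are where commutativity of the
   [U]-action on [X] is needed. *)
Lemma ad_dual_module_derivation (f : X -> C) :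
  banach_AU_module mulU mulA lUA rUA la ra lu ru -> commutative_action lu ru ->
  dual_elem f -> is_derivation (ad_dual la ra f).
Proof.
move=> [[cla cra hla hra hlar] _ [c1 c2 c3] [c4 c5 c6]] hC hf.
have [f1 f2 _] := hf; have [K K0 hK] := dual_elem_bound hf.
have [la1 la2 la3 la4 _] := cla; have [ra1 ra2 ra3 ra4 _] := cra.
have bnd : derivation_bound (ad_dual la ra f) (2 * K).
  move=> a x; rewrite /ad_dual /dual_lact /dual_ract mulr_natl mulr2n mulrDl.
  apply: le_trans (rnormD _ _) _; rewrite rnormN.
  apply: lerD; apply: le_trans (hK _) _; apply: ler_wpM2l => //.
    by rewrite mulrC; exact: (contractive_bilinear_rnorm cra).
  exact: (contractive_bilinear_rnorm cla).
rewrite /ad_dual /dual_lact /dual_ract in bnd *.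
apply: module_derivation_of => [a|a b|||al a|al a]; try apply: funext => x.
- apply: dual_elem_of => [x y|k x|]; rewrite ?(ra1, la3, f1, ra2, la4, f2); [ring|ring|].
  by exists (2 * K * rnorm a) => x; have := bnd a x; rewrite mulrA.
- by rewrite ra3 la1 !f1; ring.
- by exists (2 * K).
- by move=> a b; apply: funext => x; rewrite /dual_lact /dual_ract hra hla hlar; ring.
- by rewrite /dual_lact -c5 c3 -c1 hC.
- by rewrite /dual_ract c4 -c2 (hC al (ra x a)) c6.
Qed.

End ModuleDerivations.
End DualsAndDerivations.

Section L1Module.
Variable R : realType.
Local Notation C := R[i].
Variable X : completeNormedModType C.
Local Notation E := (l1 X).

(* The junk value [0] is never used: [l1_of] is only applied to sequences
   dominated by an element of [l1 X]. *)
Definition l1_of (f : nat -> X) : E :=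
  if pselect (l1_bounded f) is left h then L1 (asboolT h) else 0.

Lemma l1_ofK f : l1_bounded f -> l1v (l1_of f) = f.
Proof. by move=> h; rewrite /l1_of; case: pselect. Qed.

Lemma l1_bounded_dominated (e : E) (f : nat -> X) (c : R) :
  (forall n, rnorm (f n) <= c * rnorm (l1v e n)) -> l1_bounded f.
Proof.
move=> H; exists (`|c| * l1_norm e) => N; apply: le_trans (l1_psum_le _ N) _.
  move=> n; apply: le_trans (H n) _.
  by apply: ler_wpM2r; [exact: rnorm_ge0 | exact: ler_norm].
by apply: ler_wpM2l; [exact: normr_ge0 | exact: l1_psum_le_norm].
Qed.

Definition l1_lact (T : normedModType C) (m : T -> X -> X) (t : T) (e : E) : E :=
  l1_of (fun n => m t (l1v e n)).

Definition l1_ract (T : normedModType C) (m : X -> T -> X) (e : E) (t : T) : E :=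
  l1_of (fun n => m (l1v e n) t).

Section Actions.
Variable T : normedModType C.

Lemma l1v_lact (m : T -> X -> X) : contractive_bilinear m ->
  forall t e n, l1v (l1_lact m t e) n = m t (l1v e n).
Proof.
move=> hm t e n; rewrite /l1_lact l1_ofK //.
by apply: (@l1_bounded_dominated e _ (rnorm t)) => k; apply: contractive_bilinear_rnorm.
Qed.

Lemma l1v_ract (m : X -> T -> X) : contractive_bilinear m ->
  forall e t n, l1v (l1_ract m e t) n = m (l1v e n) t.
Proof.
move=> hm e t n; rewrite /l1_ract l1_ofK //.
apply: (@l1_bounded_dominated e _ (rnorm t)) => k.
by rewrite mulrC; apply: contractive_bilinear_rnorm.
Qed.

Lemma contractive_bilinear_l1_lact (m : T -> X -> X) :
  contractive_bilinear m -> contractive_bilinear (l1_lact m).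
Proof.
move=> hm; have [h1 h2 h3 h4 _] := hm.
split=> [u1 u2 v|k u v|u v1 v2|k u v|u v];
  try by apply: l1_ext => n; rewrite ?(l1vD, l1vZ, l1v_lact hm, h1, h2, h3, h4).
rewrite !l1_normE [`|u|]rnormE -rmorphM lecR; apply: l1_norm_le => N.
apply: le_trans (_ : rnorm u * l1_psum (l1v v) N <= _).
  by apply: l1_psum_le => n; rewrite l1v_lact //; apply: contractive_bilinear_rnorm.
by apply: ler_wpM2l; [exact: rnorm_ge0 | exact: l1_psum_le_norm].
Qed.

Lemma contractive_bilinear_l1_ract (m : X -> T -> X) :
  contractive_bilinear m -> contractive_bilinear (l1_ract m).
Proof.
move=> hm; have [h1 h2 h3 h4 _] := hm.
split=> [u1 u2 v|k u v|u v1 v2|k u v|u v];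
  try by apply: l1_ext => n; rewrite ?(l1vD, l1vZ, l1v_ract hm, h1, h2, h3, h4).
rewrite !l1_normE [`|v|]rnormE -rmorphM lecR mulrC; apply: l1_norm_le => N.
apply: le_trans (_ : rnorm v * l1_psum (l1v u) N <= _).
  by apply: l1_psum_le => n; rewrite l1v_ract // mulrC; apply: contractive_bilinear_rnorm.
by apply: ler_wpM2l; [exact: rnorm_ge0 | exact: l1_psum_le_norm].
Qed.

End Actions.

Section Module.
Variables (U A : completeNormedModType C) (mulU : U -> U -> U) (mulA : A -> A -> A)
  (lUA : U -> A -> A) (rUA : A -> U -> A) (la : A -> X -> X) (ra : X -> A -> X)
  (lu : U -> X -> X) (ru : X -> U -> X).

Lemma l1_banach_AU_module :
  banach_AU_module mulU mulA lUA rUA la ra lu ru ->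
  banach_AU_module mulU mulA lUA rUA (l1_lact la) (l1_ract ra) (l1_lact lu) (l1_ract ru).
Proof.
move=> [[cla cra hla hra hlar] [clu cru hlu hru hlur] [c1 c2 c3] [c4 c5 c6]].
split; [split|split|split|split];
  try solve [exact: contractive_bilinear_l1_lact | exact: contractive_bilinear_l1_ract].
all: move=> ? ? ?; apply: l1_ext => n.
all: rewrite ?(l1v_lact cla, l1v_ract cra, l1v_lact clu, l1v_ract cru).
all: solve [exact: hla | exact: hra | exact: hlar | exact: hlu | exact: hru |
            exact: hlur | exact: c1 | exact: c2 | exact: c3 | exact: c4 |
            exact: c5 | exact: c6].
Qed.

Lemma l1_commutative_action :
  commutative_action lu ru -> commutative_action (l1_lact lu) (l1_ract ru).
Proof. by move=> h al x; rewrite /l1_lact /l1_ract; under eq_fun do rewrite h. Qed.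

Local Notation is_derivation := (module_derivation mulA lUA rUA la ra lu ru).

Definition l1_derivation (Dn : nat -> A -> X -> C) (a : A) (e : E) : C :=
  csum (fun n => Dn n a (l1v e n)).

Variable Dn : nat -> A -> X -> C.
Hypothesis Dn_bound : forall n, derivation_bound (Dn n) 1.

Lemma l1_derivation_psum_le a e N :
  \sum_(0 <= k < N) rnorm (Dn k a (l1v e k)) <= rnorm a * l1_norm e.
Proof.
apply: le_trans (_ : rnorm a * l1_psum (l1v e) N <= _).
  by rewrite /l1_psum mulr_sumr; apply: ler_sum => i _; rewrite -[_ * _]mul1r; apply: Dn_bound.
by apply: ler_wpM2l; [exact: rnorm_ge0 | exact: l1_psum_le_norm].
Qed.

Lemma l1_derivation_summable a e : abs_summable (fun n => Dn n a (l1v e n)).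
Proof. by exists (rnorm a * l1_norm e); apply: l1_derivation_psum_le. Qed.

Lemma l1_derivation_bound a e : rnorm (l1_derivation Dn a e) <= rnorm a * l1_norm e.
Proof.
apply: rnorm_csum_le; [exact: l1_derivation_summable | exact: l1_derivation_psum_le].
Qed.

Lemma l1_module_derivation :
  banach_AU_module mulU mulA lUA rUA la ra lu ru -> (forall n, is_derivation (Dn n)) ->
  module_derivation mulA lUA rUA (l1_lact la) (l1_ract ra) (l1_lact lu) (l1_ract ru)
    (l1_derivation Dn).
Proof.
move=> [[cla cra _ _ _] [clu cru _ _ _] _ _] hD.
have hs := l1_derivation_summable.
have Dlin n a : dual_elem (Dn n a) by have [h _ _ _ _] := hD n.
split.
- move=> a; apply: dual_elem_of => [x y|k x|].
  + rewrite /l1_derivation -csumD //; congr csum; apply: funext => n.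
    by rewrite l1vD; have [h _ _] := Dlin n a; apply: h.
  + rewrite /l1_derivation -csumZ //; congr csum; apply: funext => n.
    by rewrite l1vZ; have [_ h _] := Dlin n a; apply: h.
  + by exists (rnorm a) => x; apply: l1_derivation_bound.
- move=> a b; apply: funext => x; rewrite /l1_derivation -csumD //.
  by congr csum; apply: funext => n; have [_ -> _ _ _] := hD n.
- exists 1 => a x; rewrite mul1r rnormE [`|a|]rnormE l1_normE -rmorphM lecR.
  exact: l1_derivation_bound.
- move=> a b; apply: funext => x; rewrite /dual_ract /dual_lact /l1_derivation -csumD //.
  congr csum; apply: funext => n; rewrite l1v_lact // l1v_ract //.
  by have [_ _ _ -> _] := hD n.
- split=> al a; apply: funext => x; rewrite /dual_lact /dual_ract /l1_derivation;
    congr csum; apply: funext => n; rewrite ?(l1v_ract cru, l1v_lact clu).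
  + by have [_ _ _ _ [-> _]] := hD n.
  + by have [_ _ _ _ [_ ->]] := hD n.
Qed.

End Module.

Definition l1_single (k : nat) (x : X) : E := l1_of (fun n => if n == k then x else 0).

Lemma l1_psum_single k (x : X) N :
  l1_psum (fun n => if n == k then x else 0) N = if (k < N)%N then rnorm x else 0.
Proof.
rewrite /l1_psum (@sum_nat_supp1 _ (fun n => rnorm (if n == k then x else 0)) k N).
  by rewrite eqxx.
by move=> m hm; rewrite (negbTE hm) rnorm0.
Qed.

Lemma l1v_single k x n : l1v (l1_single k x) n = if n == k then x else 0.
Proof.
rewrite /l1_single l1_ofK //; exists (rnorm x) => N; rewrite l1_psum_single.
by case: ifP => _; [exact: lexx | exact: rnorm_ge0].
Qed.

Lemma l1_norm_single k x : l1_norm (l1_single k x) = rnorm x.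
Proof.
have psE N : l1_psum (l1v (l1_single k x)) N = if (k < N)%N then rnorm x else 0.
  by rewrite -l1_psum_single; apply: eq_bigr => n _; rewrite l1v_single.
apply/le_anti/andP; split.
  by apply: l1_norm_le => N; rewrite psE; case: ifP => _; [exact: lexx | exact: rnorm_ge0].
by have := l1_psum_le_norm (l1_single k x) k.+1; rewrite psE ltnSn.
Qed.

Lemma l1_singleD k x y : l1_single k (x + y) = l1_single k x + l1_single k y.
Proof. by apply: l1_ext => n; rewrite l1vD !l1v_single; case: eqP; rewrite ?addr0. Qed.

Lemma l1_singleZ k (c : C) x : l1_single k (c *: x) = c *: l1_single k x.
Proof. by apply: l1_ext => n; rewrite l1vZ !l1v_single; case: eqP; rewrite ?scaler0. Qed.

Lemma l1_lact_single (T : normedModType C) (m : T -> X -> X) : contractive_bilinear m ->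
  forall t k x, l1_lact m t (l1_single k x) = l1_single k (m t x).
Proof.
move=> hm t k x; apply: l1_ext => n; rewrite l1v_lact // !l1v_single.
by case: eqP; rewrite ?(contractive_bilinear0r hm).
Qed.

Lemma l1_ract_single (T : normedModType C) (m : X -> T -> X) : contractive_bilinear m ->
  forall t k x, l1_ract m (l1_single k x) t = l1_single k (m x t).
Proof.
move=> hm t k x; apply: l1_ext => n; rewrite l1v_ract // !l1v_single.
by case: eqP; rewrite ?(contractive_bilinear0l hm).
Qed.

Lemma l1_derivation_single (A : completeNormedModType C) (Dn : nat -> A -> X -> C) :
  (forall n a, dual_elem (Dn n a)) ->
  forall a k x, l1_derivation Dn a (l1_single k x) = Dn k a x.
Proof.
move=> hD a k x; pose t n := Dn n a (l1v (l1_single k x) n).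
have supp m : m != k -> t m = 0.
  by move=> hm; rewrite /t l1v_single (negbTE hm) dual_elem0.
by rewrite /l1_derivation -/t (csum_supp1 supp) /t l1v_single eqxx.
Qed.

Lemma dual_elem_single (g : E -> C) k : dual_elem g -> dual_elem (fun x => g (l1_single k x)).
Proof.
move=> [h1 h2 [M hM]]; split=> [x y|c x|]; rewrite ?l1_singleD ?l1_singleZ //.
by exists M => x; have := hM (l1_single k x); rewrite l1_normE l1_norm_single -rnormE.
Qed.

Lemma ad_dual_single (A : completeNormedModType C) (la : A -> X -> X) (ra : X -> A -> X) :
  contractive_bilinear la -> contractive_bilinear ra ->
  forall (g : E -> C) a k x,
  ad_dual (l1_lact la) (l1_ract ra) g a (l1_single k x) =
  ad_dual la ra (fun y => g (l1_single k y)) a x.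
Proof.
move=> cla cra g a k x.
by rewrite /ad_dual /dual_lact /dual_ract l1_lact_single // l1_ract_single.
Qed.
End L1Module.

Section Geometric.
Variable R : realType.

Lemma half_norm_lt1 : `|2^-1 : R| < 1.
Proof. by rewrite ger0_norm ?invr_ge0 ?ler0n // invf_lt1 ?ltr1n. Qed.

Lemma sum_geometric_half_le (c : R) N : 0 <= c ->
  \sum_(0 <= k < N) c * 2^-1 ^+ k <= 2 * c.
Proof.
move=> c0; have h2 : (0 : R) < 2^-1 by rewrite invr_gt0.
have := @geometric_le_lim R N c (2^-1) c0 h2 half_norm_lt1.
have -> : (1 - 2^-1 : R)^-1 = 2 by rewrite {1}(splitr 1) div1r addrK invrK.
by rewrite seriesEnat mulrC.
Qed.

Lemma geometric_half_small (c e : R) : 0 < e -> exists N, c * 2^-1 ^+ N <= e.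
Proof.
move=> e0; have := cvg_geometric c half_norm_lt1.
move=> /cvgrPdist_le/(_ e e0)[N _ HN]; exists N.
by have := HN N (leqnn N); rewrite sub0r normrN; apply: le_trans (ler_norm _).
Qed.

End Geometric.

Section InnerFromGeometricApprox.
Variable R : realType.
Local Notation C := R[i].
Variables (A X : completeNormedModType C) (la : A -> X -> X) (ra : X -> A -> X).

Lemma ad_dual_psum (g : nat -> X -> C) N a x :
  ad_dual la ra (fun y => psum (g^~ y) N) a x = psum (fun k => ad_dual la ra (g k) a x) N.
Proof. by rewrite /ad_dual /dual_lact /dual_ract /psum sumrB. Qed.

Lemma ad_dual_csum_geometric (g : nat -> X -> C) (D : A -> X -> C) (c B : R) :
  0 <= c -> (forall k, dual_elem (g k)) ->
  (forall k, functional_bound (g k) (c * 2^-1 ^+ k)) ->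
  (forall N, derivation_bound
     (fun a x => D a x - ad_dual la ra (fun y => psum (g^~ y) N) a x) (B * 2^-1 ^+ N)) ->
  dual_elem (fun x => csum (g^~ x)) /\ forall a, D a = ad_dual la ra (fun x => csum (g^~ x)) a.
Proof.
move=> c0 hg gB DB.
have psum_le x N : \sum_(0 <= k < N) rnorm (g k x) <= 2 * c * rnorm x.
  apply: le_trans (_ : \sum_(0 <= k < N) (c * rnorm x) * 2^-1 ^+ k <= _).
    by apply: ler_sum => k _; rewrite mulrAC; apply: gB.
  by rewrite -mulrA sum_geometric_half_le // mulr_ge0 // rnorm_ge0.
have summable x : abs_summable (g^~ x) by exists (2 * c * rnorm x); apply: psum_le.
split.
  apply: dual_elem_of => [x y|s x|].
  - rewrite -csumD //; congr csum; apply: funext => k.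
    by have [h _ _] := hg k; apply: h.
  - rewrite -csumZ //; congr csum; apply: funext => k.
    by have [_ h _] := hg k; apply: h.
  - by exists (2 * c) => x; apply: rnorm_csum_le.
move=> a; apply: funext => x; rewrite /ad_dual /dual_lact /dual_ract -csumB //.
apply/esym/csum_eq; first exact: abs_summableB.
move=> e e0; have [N HN] := geometric_half_small (B * (rnorm a * rnorm x)) e0.
exists N => n Nn; rewrite rnormB.
have -> : psum (fun k => g k (ra x a) - g k (la a x)) n =
    ad_dual la ra (fun y => psum (g^~ y) n) a x by rewrite ad_dual_psum.
have b0 : 0 <= B * (rnorm a * rnorm x).
  by have := le_trans (rnorm_ge0 _) (DB 0%N a x); rewrite expr0 mulr1.
apply: le_trans (DB n a x) _; apply: le_trans HN; rewrite mulrAC.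
apply: ler_wpM2l => //; apply: ler_wiXn2l Nn; first by rewrite invr_ge0.
by rewrite invf_le1 // ler1n.
Qed.

End InnerFromGeometricApprox.

Section HalvingApproximation.
Variable R : realType.
Local Notation C := R[i].
Variables (U A X : completeNormedModType C) (mulU : U -> U -> U) (mulA : A -> A -> A)
  (lUA : U -> A -> A) (rUA : A -> U -> A) (la : A -> X -> X) (ra : X -> A -> X)
  (lu : U -> X -> X) (ru : X -> U -> X).
Hypotheses (hM : banach_AU_module mulU mulA lUA rUA la ra lu ru)
  (hC : commutative_action lu ru).

Local Notation is_derivation := (module_derivation mulA lUA rUA la ra lu ru).

Definition halving_approx (D : A -> X -> C) (f : X -> C) (K B : R) :=
  [/\ dual_elem f, functional_bound f (K * B) &
      derivation_bound (fun a x => D a x - ad_dual la ra f a x) (B / 2)].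

Lemma l1_coord_halving_approx (Dn : nat -> A -> X -> C) (g : l1 X -> C) (M : C) n :
  (forall n a, dual_elem (Dn n a)) -> dual_elem g -> (forall e, `|g e| <= M * `|e|) ->
  (forall a e, `|l1_derivation Dn a e - ad_dual (l1_lact la) (l1_ract ra) g a e|
     <= (2^-1 : R)%:C * `|a| * `|e|) ->
  halving_approx (Dn n) (fun x => g (l1_single n x)) (rnorm M) 1.
Proof.
have [[cla cra _ _ _] _ _ _] := hM.
move=> hDn hg gM approx; split; first exact: dual_elem_single.
  move=> x; rewrite mulr1; have := rnorm_le_of_normr (gM (l1_single n x)).
  by rewrite rnorm_l1 l1_norm_single.
move=> a x; rewrite -ad_dual_single // -(l1_derivation_single hDn).
have := rnorm_le_of_normr (approx a (l1_single n x)).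
rewrite rnormM rnorm_real rnorm_norm rnorm_l1 l1_norm_single ger0_norm ?invr_ge0 //.
by rewrite mul1r -mulrA.
Qed.

Lemma uaa_uniform_halving :
  module_uniformly_approximately_amenable mulU mulA lUA rUA ->
  exists2 K, 0 < K & forall D, is_derivation D -> derivation_bound D 1 ->
    exists f, halving_approx D f K 1.
Proof.
move=> uaa; apply: contrapT => no_bound.
have bad n : exists D, [/\ is_derivation D, derivation_bound D 1 &
    forall f, ~ halving_approx D f n.+1%:R 1].
  apply: contrapT => hn; apply: no_bound; exists n.+1%:R; first exact: ltr0Sn.
move=> D hD hB.
  apply: contrapT => hf; apply: hn; exists D; split => // f hf'.
  by apply: hf; exists f.
have [Dn hDn] := choice bad.
have hDer n : is_derivation (Dn n) by case: (hDn n).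
have hB n : derivation_bound (Dn n) 1 by case: (hDn n).
have hDl n a : dual_elem (Dn n a) by have [h _ _ _ _] := hDer n.
have [I [le [f [_ [le_refl _] _ hf approx]]]] := uaa _ _ _ _ _
  (l1_banach_AU_module hM) (l1_commutative_action hC) _ (l1_module_derivation hB hM hDer).
have half_gt0 : (0 : C) < (2^-1 : R)%:C by rewrite ltcR invr_gt0.
have [i0 hi0] := approx _ half_gt0.
have [_ _ [M gM]] := hf i0.
pose n := Num.Def.archi_bound (rnorm M).
have [_ _ no_approx] := hDn n; apply: (no_approx (fun x => f i0 (l1_single n x))).
have [h1 h2 h3] := l1_coord_halving_approx n hDl (hf i0) gM (hi0 i0 (le_refl i0)).
split=> // x; apply: le_trans (h2 x) _; rewrite !mulr1.
apply: ler_wpM2r; first exact: rnorm_ge0.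
apply: le_trans (ltW (archi_boundP (rnorm_ge0 M))) _.
by rewrite ler_nat.
Qed.

Lemma halving_approx_scale K :
  (forall D, is_derivation D -> derivation_bound D 1 -> exists f, halving_approx D f K 1) ->
  forall D B, is_derivation D -> 0 < B -> derivation_bound D B ->
    exists f, halving_approx D f K B.
Proof.
move=> halve D B hD B0 hB.
have B'0 : 0 < B^-1 by rewrite invr_gt0.
have hD' : derivation_bound (fun a x => (B^-1)%:C * D a x) 1.
  move=> a x; rewrite rnormM rnorm_real (gtr0_norm B'0).
  apply: le_trans (_ : B^-1 * (B * (rnorm a * rnorm x)) <= _).
    by apply: ler_wpM2l; [exact: ltW | exact: hB].
  by rewrite mul1r mulrA mulVf ?mul1r // lt0r_neq0.
have [f [hf fK fD]] := halve _ (module_derivationZ (B^-1)%:C hD) hD'.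
exists (fun x => B%:C * f x); split.
- exact: dual_elemZ.
- move=> x; rewrite rnormM rnorm_real (gtr0_norm B0).
  apply: le_trans (_ : B * (K * 1 * rnorm x) <= _).
    by apply: ler_wpM2l; [exact: ltW | exact: fK].
  by rewrite mulr1 mulrA [B * K]mulrC.
- move=> a x; rewrite ad_dualZ.
  have -> : D a x - B%:C * ad_dual la ra f a x =
      B%:C * ((B^-1)%:C * D a x - ad_dual la ra f a x).
    have BB : B%:C * (B^-1)%:C = 1 :> C by rewrite -rmorphM mulfV ?lt0r_neq0.
    by rewrite [RHS]mulrBr mulrA BB mul1r.
  rewrite rnormM rnorm_real (gtr0_norm B0).
  apply: le_trans (_ : B * (1 / 2 * (rnorm a * rnorm x)) <= _).
    by apply: ler_wpM2l; [exact: ltW | exact: fD].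
  by rewrite div1r -mulrA.
Qed.

Lemma inner_of_halving K : 0 <= K ->
  (forall D B, is_derivation D -> 0 < B -> derivation_bound D B ->
     exists f, halving_approx D f K B) ->
  forall D, is_derivation D -> exists f, dual_elem f /\ forall a, D a = ad_dual la ra f a.
Proof.
move=> K0 halve D hD; have [B0 B00 hB0] := module_derivation_bound hD.
pose Bk k := B0 * 2^-1 ^+ k.
have Bk_gt0 k : 0 < Bk k by rewrite mulr_gt0 // exprn_gt0 // invr_gt0.
have step (p : (A -> X -> C) * nat) : exists f,
    is_derivation p.1 -> derivation_bound p.1 (Bk p.2) -> halving_approx p.1 f K (Bk p.2).
  have [[h1 h2]|hn] := pselect (is_derivation p.1 /\ derivation_bound p.1 (Bk p.2)).
    by have [f hf] := halve _ _ h1 (Bk_gt0 _) h2; exists f.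
  by exists (fun _ => 0) => h1 h2; exfalso; apply: hn.
have [F hF] := choice step.
pose fix rem k := if k is k'.+1
  then (fun a x => rem k' a x - ad_dual la ra (F (rem k', k')) a x) else D.
pose g k := F (rem k, k).
have rem_halving k :
    [/\ is_derivation (rem k), derivation_bound (rem k) (Bk k) &
        halving_approx (rem k) (g k) K (Bk k)].
  elim: k => [|k [h1 h2 [h3 h4 h5]]].
    have hB : derivation_bound (rem 0%N) (Bk 0%N) by rewrite /Bk expr0 mulr1.
    by split => //; apply: hF.
  have h1' : is_derivation (rem k.+1).
    exact: module_derivationB h1 (ad_dual_module_derivation hM hC h3).
  have h2' : derivation_bound (rem k.+1) (Bk k.+1).
    have -> : Bk k.+1 = Bk k / 2 by rewrite /Bk exprS; ring.
    exact: h5.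
  by split => //; apply: hF.
have remE N a x : rem N a x = D a x - ad_dual la ra (fun y => psum (g^~ y) N) a x.
  elim: N => [|N IH]; first by rewrite /ad_dual /dual_lact /dual_ract /psum !big_geq ?subrr ?subr0.
  rewrite /= IH !ad_dual_psum /psum big_nat_recr //= -/(g N); ring.
exists (fun x => csum (g^~ x)).
apply: (ad_dual_csum_geometric (c := K * B0) (B := B0)).
- by rewrite mulr_ge0 // ltW.
- by move=> k; have [_ _ []] := rem_halving k.
- move=> k x; have [_ _ [_ hk _]] := rem_halving k.
  by rewrite -[K * B0 * _]mulrA; apply: hk.
- by move=> N a x; rewrite -remE; have [_ h _] := rem_halving N; apply: h.
Qed.

End HalvingApproximation.

Theorem theorem4p6 (R : realType)
    (U : completeNormedModType R[i]) (mulU : U -> U -> U)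
    (A : completeNormedModType R[i]) (mulA : A -> A -> A)
    (lUA : U -> A -> A) (rUA : A -> U -> A) :
  banach_algebra mulU ->
  banach_algebra mulA ->
  banach_bimodule mulU lUA rUA ->
  commutative_action lUA rUA ->
  compatible_actions mulA lUA rUA ->
  (module_uniformly_approximately_amenable mulU mulA lUA rUA <->
   module_amenable mulU mulA lUA rUA).
Proof.
move=> _ _ _ _ _; split=> [uaa X la ra lu ru hM hC | amen X la ra lu ru hM hC D hD].
  have [K K0 halve] := uaa_uniform_halving hM hC uaa.
  apply: (inner_of_halving hM hC (ltW K0)); exact: halving_approx_scale.
have [f [hf hDf]] := amen X la ra lu ru hM hC D hD.
exists unit, (fun _ _ => True), (fun _ => f); split => // eps eps0.
exists tt => _ _ a x; rewrite hDf subrr normr0.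
by rewrite !mulr_ge0 // ltW.
Qed.
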